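(* Let $q>1$, $0\le M_0<M$, let $u$ be a sufficiently smooth $L$-periodic solution of $u_t=-\alpha uu_x+\beta u_{xxx}$ on $[0,T]\times\mathbb{R}$, $r>\sup_{t,x}|u(t,x)|$. Assume $u^{(0)}_k=u(0,k\Delta x)$, that $u^{(0)},\dots,u^{(M_0+1)}$ are obtained successively as solutions of the scheme, that $\|u^{(m)}\|_\infty\le r$ for $m\le M_0$, that $\Delta t<\min\{\varepsilon_1(q,r,\Delta x),\varepsilon_2(q,r,\Delta x)\}$, and that $\|u^{(M_0+1)}\|_\infty\le qr$. Let $c_0>0$ be a constant independent of $\Delta t,\Delta x$ with $\|\tau^{(m)}\|,\|\delta^+_x\tau^{(m)}\|\le c_0((\Delta t)^2+(\Delta x)^2)$ for $m=0,\dots,M_0$. If $\Delta t\le\Delta x$, then for $m=0,\dots,M_0$, $$\delta^+_t\|\delta^+_x e^{(m)}\|^2\le -\delta^+_t A^{(m)} + C_2\,\mu^+_t\|e^{(m)}\|_{H^1}^2+\Big(\frac{|\alpha|}{6|\beta|}+1\Big)c_0^2\big((\Delta t)^2+(\Delta x)^2\big)^2,$$ where $A^{(m)}=\frac{\alpha}{3\beta}\sum_{k=1}^K (e^{(m)}_k)^3\Delta x$ and $C_2=C_2(q,r)>0$ is a constant independent of $\Delta t$ and $\Delta x$.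
   Context: $L>0$, $K\in\mathbb{N}$, $\Delta x=L/K$; $T>0$, $M\in\mathbb{N}$, $\Delta t=T/M$; $\alpha\in\mathbb{R}$, $\beta\ne0$. Grid functions are $K$-periodic real sequences. $\delta^+_x v_k=(v_{k+1}-v_k)/\Delta x$, $\delta^{\langle 1\rangle}_x v_k = (v_{k+1}-v_{k-1})/(2\Delta x)$, $\delta^{\langle 2\rangle}_x v_k = (v_{k+1}-2v_k+v_{k-1})/(\Delta x)^2$, $\|v\|=(\sum_{k=1}^K v_k^2\Delta x)^{1/2}$, $\|v\|_\infty=\max_k|v_k|$, $\|v\|_{H^1}=(\|v\|^2+\|\delta^+_xv\|^2)^{1/2}$; $\delta^+_t v^{(n)}=(v^{(n+1)}-v^{(n)})/\Delta t$, $\mu^+_t v^{(n)}=(v^{(n+1)}+v^{(n)})/2$, applied also to scalar sequences. The scheme: $u^{(n+1)}$ solves it at step $n$ if $\delta^+_t u^{(n)}_k = -\frac{\alpha}{6}\delta^{\langle 1\rangle}_x\{(u^{(n+1)}_k)^2 + u^{(n+1)}_k u^{(n)}_k + (u^{(n)}_k)^2\} + \beta\delta^{\langle 1\rangle}_x\delta^{\langle 2\rangle}_x \mu^+_t u^{(n)}_k$ for all $k$. $\varepsilon_1(q,r,\Delta x) = (q-1)(\Delta x)^3[\frac{|\alpha|}{6}(\Delta x)^2(q^2+q+1)r + \frac{3}{2}|\beta|(q+1)]^{-1}$, $\varepsilon_2(q,r,\Delta x) = (\Delta x)^3[\frac{|\alpha|}{6}(\Delta x)^2(2q+1)r + \frac{3}{2}|\beta|]^{-1}$.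 $\tilde u^{(m)}_k=u(m\Delta t,k\Delta x)$, $e^{(m)}=u^{(m)}-\tilde u^{(m)}$, and the truncation error $\tau^{(m)}$ is defined by $\delta^+_t \tilde u^{(m)}_k = -\frac{\alpha}{6}\delta^{\langle 1\rangle}_x\{(\tilde u^{(m+1)}_k)^2 + \tilde u^{(m+1)}_k \tilde u^{(m)}_k + (\tilde u^{(m)}_k)^2\} + \beta\delta^{\langle 1\rangle}_x\delta^{\langle 2\rangle}_x \mu^+_t \tilde u^{(m)}_k+\tau^{(m)}_k$. *)

From Stdlib Require Import Reals Lra Lia ZArith List.
From Coquelicot Require Import Coquelicot.
Open Scope R_scope.

Definition pdt (f : R -> R -> R) : R -> R -> R :=
  fun t x => Derive (fun s => f s x) t.
Definition pdx (f : R -> R -> R) : R -> R -> R :=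
  fun t x => Derive (fun y => f t y) x.

(* iterated partial derivatives: true = d/dt, false = d/dx, applied
   from the head of the list outward *)
Fixpoint pderiv (w : list bool) (f : R -> R -> R) : R -> R -> R :=
  match w with
  | nil => f
  | b :: w' => (if b then pdt else pdx) (pderiv w' f)
  end.

Definition smooth2 (f : R -> R -> R) : Prop :=
  forall w : list bool,
    (forall t x, ex_derive (fun s => pderiv w f s x) t) /\
    (forall t x, ex_derive (fun y => pderiv w f t y) x) /\
    (forall t x, continuous (fun p : R * R => pderiv w f (fst p) (snd p)) (t, x)).

Definition gridfun := Z -> R.

Definition periodic_grid (K : nat) (v : gridfun) : Prop :=
  forall k : Z, v (k + Z.of_nat K)%Z = v k.

Definition dxp (dx : R) (v : gridfun) : gridfun :=
  fun k => (v (k + 1)%Z - v k) / dx.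
Definition dx1 (dx : R) (v : gridfun) : gridfun :=
  fun k => (v (k + 1)%Z - v (k - 1)%Z) / (2 * dx).
Definition dx2 (dx : R) (v : gridfun) : gridfun :=
  fun k => (v (k + 1)%Z - 2 * v k + v (k - 1)%Z) / (dx * dx).

Definition gsum (K : nat) (f : Z -> R) : R :=
  fold_right Rplus 0 (map (fun i => f (Z.of_nat i)) (seq 1 K)).

Definition norm2 (K : nat) (dx : R) (v : gridfun) : R :=
  gsum K (fun k => (v k) ^ 2 * dx).
Definition gnorm (K : nat) (dx : R) (v : gridfun) : R := sqrt (norm2 K dx v).
Definition norm_inf (K : nat) (v : gridfun) : R :=
  fold_right Rmax 0 (map (fun i => Rabs (v (Z.of_nat i))) (seq 1 K)).
Definition normH1_2 (K : nat) (dx : R) (v : gridfun) : R :=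
  norm2 K dx v + norm2 K dx (dxp dx v).

Definition scheme_step (alpha beta dx dt : R) (u0 u1 : gridfun) : Prop :=
  forall k : Z,
    (u1 k - u0 k) / dt =
      - (alpha / 6) * dx1 dx (fun j => (u1 j) ^ 2 + u1 j * u0 j + (u0 j) ^ 2) k
      + beta * dx1 dx (dx2 dx (fun j => (u1 j + u0 j) / 2)) k.

Definition trunc_err (alpha beta dx dt : R) (ut : nat -> gridfun) (m : nat) : gridfun :=
  fun k =>
    (ut (S m) k - ut m k) / dt
    - ( - (alpha / 6) * dx1 dx (fun j => (ut (S m) j) ^ 2 + ut (S m) j * ut m j + (ut m j) ^ 2) k
        + beta * dx1 dx (dx2 dx (fun j => (ut (S m) j + ut m j) / 2)) k ).

Definition scheme_eps1 (alpha beta q r dx : R) : R :=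
  (q - 1) * dx ^ 3 /
    (Rabs alpha / 6 * dx ^ 2 * (q ^ 2 + q + 1) * r + 3 / 2 * Rabs beta * (q + 1)).
Definition scheme_eps2 (alpha beta q r dx : R) : R :=
  dx ^ 3 / (Rabs alpha / 6 * dx ^ 2 * (2 * q + 1) * r + 3 / 2 * Rabs beta).

(* Write e0, e1 for the errors U - u~ at two consecutive time levels and D_t for (. 1 - . 0) / dt.
   Subtracting the truncation relation from the scheme gives  D_t e = - dx1 G - tau  with
     G = - beta dx2 w + (alpha / 6) (E + L),   w = (e1 + e0) / 2,   E = e1^2 + e1 e0 + e0^2,
   and L bilinear in (u~, e).  Pairing with G, the flux term  sum (dx1 G) G  vanishes by
   periodicity, and expanding G gives
     (beta / 2) D_t |dxp e|^2 + (alpha / 6) D_t sum e^3 + (alpha / 6) sum (D_t e) L = - sum tau G.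
   By the error equation again,  sum (D_t e) L = - sum (dx1 G) L - sum tau L.  After a summation
   by parts every summand of  sum (dx1 G) L  is bounded by a constant times the H^1 density of e
   on three neighbouring nodes, since u~ has bounded difference quotients and
   |e| <= q r + sup |u|.  The one summand pairing  u~1 - u~0 = O(dt)  with  dx2 w = O(|dxp e| / dx)
   needs dt / dx^2 bounded, which follows from  dt < eps2 <= 2 / (3 |beta|) dx^3.  The remaining
   tau-terms are absorbed by Young's inequality. *)

From Stdlib Require Import Reals ZArith List Lra Lia Classical ClassicalEpsilon.
From Coquelicot Require Import Coquelicot.
Open Scope R_scope.

(** * Sums and maxima over a period *)

Lemma fold_right_Rplus_init (l : list R) c :
  fold_right Rplus c l = fold_right Rplus 0 l + c.
Proof. induction l as [|x l IH]; simpl; [lra|]. rewrite IH; lra. Qed.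

Lemma gsum_S n f : gsum (S n) f = gsum n f + f (Z.of_nat n + 1)%Z.
Proof.
  unfold gsum. rewrite seq_S, map_app, fold_right_app. cbn [map fold_right].
  rewrite fold_right_Rplus_init. replace (Z.of_nat (1 + n)) with (Z.of_nat n + 1)%Z by lia.
  lra.
Qed.

Lemma gsum_ext n f g : (forall k, f k = g k) -> gsum n f = gsum n g.
Proof. intros H; induction n; [reflexivity|]. rewrite !gsum_S, IHn, H; reflexivity. Qed.

Lemma gsum_add n f g : gsum n (fun k => f k + g k) = gsum n f + gsum n g.
Proof. induction n; [unfold gsum; simpl; lra|]. rewrite !gsum_S, IHn; lra. Qed.

Lemma gsum_sub n f g : gsum n (fun k => f k - g k) = gsum n f - gsum n g.
Proof. induction n; [unfold gsum; simpl; lra|]. rewrite !gsum_S, IHn; lra. Qed.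

Lemma gsum_opp n f : gsum n (fun k => - f k) = - gsum n f.
Proof. induction n; [unfold gsum; simpl; lra|]. rewrite !gsum_S, IHn; lra. Qed.

Lemma gsum_scal n c f : gsum n (fun k => c * f k) = c * gsum n f.
Proof. induction n; [unfold gsum; simpl; lra|]. rewrite !gsum_S, IHn; lra. Qed.

Lemma gsum_le n f g : (forall k, f k <= g k) -> gsum n f <= gsum n g.
Proof.
  intros H; induction n; [unfold gsum; simpl; lra|].
  rewrite !gsum_S. specialize (H (Z.of_nat n + 1)%Z). lra.
Qed.

Lemma gsum_abs n f : Rabs (gsum n f) <= gsum n (fun k => Rabs (f k)).
Proof.
  induction n; [unfold gsum; simpl; rewrite Rabs_R0; lra|].
  rewrite !gsum_S. eapply Rle_trans; [apply Rabs_triang|]. lra.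
Qed.

Lemma gsum_succ_shift n f :
  gsum n (fun k => f (k + 1)%Z) = gsum n f + f (Z.of_nat n + 1)%Z - f 1%Z.
Proof.
  induction n; [unfold gsum; simpl; lra|]. rewrite !gsum_S, IHn.
  replace (Z.of_nat (S n)) with (Z.of_nat n + 1)%Z by lia. lra.
Qed.

Lemma periodic_grid_eq K (v : gridfun) a b :
  periodic_grid K v -> a = (b + Z.of_nat K)%Z -> v a = v b.
Proof. intros H ->. apply H. Qed.

Ltac periodicity :=
  try unfold periodic_grid; intros; cbv beta; repeat first
    [ reflexivity | eapply periodic_grid_eq; [eassumption | lia] | f_equal ].

Ltac simpl_Z_shifts := repeat rewrite ?Z.add_simpl_r, ?Z.sub_add in *.

Section PeriodicSums.
Variables (K : nat) (f : gridfun).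
Hypothesis Pf : periodic_grid K f.

Lemma gsum_shift : gsum K (fun k => f (k + 1)%Z) = gsum K f.
Proof.
  rewrite gsum_succ_shift, <- (Pf 1%Z).
  replace (1 + Z.of_nat K)%Z with (Z.of_nat K + 1)%Z by lia. lra.
Qed.

Lemma gsum_telescope : gsum K (fun k => f (k + 1)%Z - f k) = 0.
Proof. rewrite gsum_sub, gsum_shift. lra. Qed.

Lemma gsum_eq_telescope (F G : gridfun) :
  (forall k, F k = G k + (f (k + 1)%Z - f k)) -> gsum K F = gsum K G.
Proof. intros H. rewrite (gsum_ext _ _ _ H), gsum_add, gsum_telescope. lra. Qed.

End PeriodicSums.

Lemma gsum_shift_pred K f :
  periodic_grid K f -> gsum K (fun k => f (k - 1)%Z) = gsum K f.
Proof.
  intros Pf. rewrite <- (gsum_shift K (fun k => f (k - 1)%Z)).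
  - apply gsum_ext. intro k. f_equal. lia.
  - periodicity.
Qed.

Lemma periodic_grid_shift_nat K (v : gridfun) : periodic_grid K v ->
  forall n b, v (b + Z.of_nat K * Z.of_nat n)%Z = v b.
Proof.
  intros H n. induction n as [|n IH]; intro b; [f_equal; lia|].
  rewrite <- (IH b), <- (H (b + Z.of_nat K * Z.of_nat n)%Z). f_equal. lia.
Qed.

Lemma periodic_grid_shift K (v : gridfun) : periodic_grid K v ->
  forall n b, v (b + Z.of_nat K * n)%Z = v b.
Proof.
  intros H n b. destruct (Z_le_gt_dec 0 n).
  - rewrite <- (Z2Nat.id n) by lia. apply periodic_grid_shift_nat; auto.
  - rewrite <- (periodic_grid_shift_nat K v H (Z.to_nat (- n)) (b + Z.of_nat K * n)%Z).
    f_equal. rewrite Z2Nat.id by lia. lia.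
Qed.

Lemma fold_right_Rmax_nonneg {A} (g : A -> R) l : 0 <= fold_right Rmax 0 (map g l).
Proof. induction l; simpl; [lra|]. eapply Rle_trans; [apply IHl | apply Rmax_r]. Qed.

Lemma fold_right_Rmax_ge {A} (g : A -> R) l p : In p l -> g p <= fold_right Rmax 0 (map g l).
Proof.
  induction l as [|x l IH]; simpl; [tauto|]. intros [-> | H]; [apply Rmax_l|].
  eapply Rle_trans; [apply IH; auto | apply Rmax_r].
Qed.

Lemma Rabs_le_norm_inf K (v : gridfun) : (1 <= K)%nat -> periodic_grid K v ->
  forall j, Rabs (v j) <= norm_inf K v.
Proof.
  intros HK H j.
  set (rr := ((j - 1) mod Z.of_nat K)%Z).
  assert (Hr : (0 <= rr < Z.of_nat K)%Z) by (apply Z.mod_pos_bound; lia).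
  replace (v j) with (v (Z.of_nat (Z.to_nat (rr + 1)))).
  - apply (fold_right_Rmax_ge (fun i => Rabs (v (Z.of_nat i)))). apply in_seq. lia.
  - rewrite Z2Nat.id by lia.
    rewrite <- (periodic_grid_shift K v H ((j - 1) / Z.of_nat K) (rr + 1)).
    f_equal. unfold rr. pose proof (Z.div_mod (j - 1) (Z.of_nat K)). lia.
Qed.

Lemma Rabs_add_le x y A B : Rabs x <= A -> Rabs y <= B -> Rabs (x + y) <= A + B.
Proof. intros; eapply Rle_trans; [apply Rabs_triang | lra]. Qed.

Lemma Rabs_sub_le x y A B : Rabs x <= A -> Rabs y <= B -> Rabs (x - y) <= A + B.
Proof. intros. apply Rabs_add_le; [|rewrite Rabs_Ropp]; assumption. Qed.

Lemma Rabs_mul_le x y A B : Rabs x <= A -> Rabs y <= B -> Rabs (x * y) <= A * B.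
Proof. intros. rewrite Rabs_mult. apply Rmult_le_compat; auto using Rabs_pos. Qed.

Lemma Rabs_mean_le x y M : Rabs x <= M -> Rabs y <= M -> Rabs ((x + y) / 2) <= M.
Proof.
  intros. unfold Rdiv. rewrite Rabs_mult, (Rabs_pos_eq (/ 2)) by lra.
  pose proof (Rabs_triang x y). lra.
Qed.

Lemma Rabs_div_le_of_le_mul x y B : 0 < y -> Rabs x <= B * y -> Rabs (x / y) <= B.
Proof.
  intros. rewrite Rabs_div, (Rabs_pos_eq y) by lra.
  apply Rle_div_l; lra.
Qed.

Lemma Rabs_dx_mul_le dx X B : 0 <= dx -> Rabs X <= B -> Rabs (dx * X) <= B * dx.
Proof. intros. rewrite Rabs_mult, (Rabs_pos_eq dx) by lra. nra. Qed.

Lemma Rabs_le_sqrt_of_sq_le x Q : x ^ 2 <= Q -> Rabs x <= sqrt Q.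
Proof. intros. rewrite <- sqrt_Rsqr_abs. apply sqrt_le_1_alt. unfold Rsqr. simpl in *. lra. Qed.

Lemma le_sq_of_sqrt_le x c : sqrt x <= c -> x <= c ^ 2.
Proof.
  intros H. destruct (Rle_or_lt 0 x) as [Hx | Hx].
  - rewrite <- (sqrt_sqrt x Hx). pose proof (sqrt_pos x). simpl. nra.
  - pose proof (pow2_ge_0 c). lra.
Qed.

Lemma weighted_sum_le_of_sqrt_le a b c w : 0 <= w -> sqrt a <= c -> sqrt b <= c ->
  w * a + b <= (w + 1) * c ^ 2.
Proof.
  intros Hw Ha%le_sq_of_sqrt_le Hb%le_sq_of_sqrt_le.
  pose proof (Rmult_le_compat_l _ _ _ Hw Ha). lra.
Qed.

Lemma quad_form_sq_le x1 x0 R0 : Rabs x1 <= R0 -> Rabs x0 <= R0 ->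
  (x1 ^ 2 + x1 * x0 + x0 ^ 2) ^ 2 <= 9 / 2 * R0 ^ 2 * (x1 ^ 2 + x0 ^ 2).
Proof.
  intros H1 H0.
  assert (Hq : 0 <= x1 ^ 2 + x1 * x0 + x0 ^ 2 <= 3 / 2 * (x1 ^ 2 + x0 ^ 2)).
  { pose proof (pow2_ge_0 (x1 + x0 / 2)). pose proof (pow2_ge_0 x0).
    pose proof (pow2_ge_0 (x1 - x0)). nra. }
  assert (Hs : x1 ^ 2 + x0 ^ 2 <= 2 * R0 ^ 2).
  { rewrite <- (pow2_abs x1), <- (pow2_abs x0).
    pose proof (Rabs_pos x1). pose proof (Rabs_pos x0). nra. }
  nra.
Qed.

(** * Grid functions with bounded difference quotients *)

Definition tmean (v0 v1 : gridfun) : gridfun := fun j => (v1 j + v0 j) / 2.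

Lemma dxp_tmean dx e0 e1 j : dxp dx (tmean e0 e1) j = tmean (dxp dx e0) (dxp dx e1) j.
Proof. unfold dxp, tmean, Rdiv. ring. Qed.

Lemma Rabs_dx1_mul_le dx (a e : gridfun) B0 B1 M k : 0 < dx ->
  Rabs (dx1 dx a k) <= B1 -> Rabs (a (k - 1)%Z) <= B0 -> Rabs (e (k + 1)%Z) <= M ->
  Rabs (dxp dx e k) <= M -> Rabs (dxp dx e (k - 1)%Z) <= M ->
  Rabs (dx1 dx (fun j => a j * e j) k) <= (B0 + B1) * M.
Proof.
  intros Hdx Ha1 Ha0 He Hd1 Hd0.
  replace (dx1 dx (fun j => a j * e j) k)
    with (dx1 dx a k * e (k + 1)%Z + a (k - 1)%Z * ((dxp dx e k + dxp dx e (k - 1)%Z) / 2))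
    by (unfold dx1, dxp; simpl_Z_shifts; field; lra).
  replace ((B0 + B1) * M) with (B1 * M + B0 * M) by ring.
  apply Rabs_add_le; apply Rabs_mul_le; auto using Rabs_mean_le.
Qed.

Definition grid_bounded (dx B0 B1 B2 : R) (a : gridfun) : Prop :=
  (forall j, Rabs (a j) <= B0) /\
  (forall j, Rabs (a (j + 1)%Z - a j) <= B1 * dx) /\
  (forall j, Rabs (a (j + 1)%Z - 2 * a j + a (j - 1)%Z) <= B2 * (dx * dx)).

Section GridBounded.
Variables (dx B0 B1 B2 : R) (a : gridfun).
Hypotheses (Hdx : 0 < dx) (Ha : grid_bounded dx B0 B1 B2 a).

Lemma grid_bounded_dxp j : Rabs (dxp dx a j) <= B1.
Proof. apply Rabs_div_le_of_le_mul; [lra | apply Ha]. Qed.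

Lemma grid_bounded_dx1 j : Rabs (dx1 dx a j) <= B1.
Proof.
  destruct Ha as (_ & Hd & _).
  replace (dx1 dx a j) with (((a (j + 1)%Z - a j) + (a j - a (j - 1)%Z)) / (2 * dx))
    by (unfold dx1; f_equal; ring).
  apply Rabs_div_le_of_le_mul; [lra|].
  pose proof (Hd (j - 1)%Z). simpl_Z_shifts.
  replace (B1 * (2 * dx)) with (B1 * dx + B1 * dx) by ring.
  apply Rabs_add_le; auto.
Qed.

Lemma grid_bounded_dx1_diff j : Rabs ((dx1 dx a (j + 1)%Z - dx1 dx a j) / dx) <= B2.
Proof.
  destruct Ha as (_ & _ & Hs).
  replace ((dx1 dx a (j + 1)%Z - dx1 dx a j) / dx) with
    (((a (j + 1 + 1)%Z - 2 * a (j + 1)%Z + a (j + 1 - 1)%Z)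
      + (a (j + 1)%Z - 2 * a j + a (j - 1)%Z)) / (2 * (dx * dx)))
    by (unfold dx1; simpl_Z_shifts; field; lra).
  apply Rabs_div_le_of_le_mul; [nra|].
  replace (B2 * (2 * (dx * dx))) with (B2 * (dx * dx) + B2 * (dx * dx)) by ring.
  apply Rabs_add_le; auto.
Qed.

End GridBounded.

Lemma grid_bounded_tmean dx B0 B1 B2 a0 a1 :
  grid_bounded dx B0 B1 B2 a0 -> grid_bounded dx B0 B1 B2 a1 ->
  grid_bounded dx B0 B1 B2 (tmean a0 a1).
Proof.
  intros (Hb0 & Hd0 & Hs0) (Hb1 & Hd1 & Hs1). unfold tmean. repeat split; intro j.
  - apply Rabs_mean_le; auto.
  - replace ((a1 (j + 1)%Z + a0 (j + 1)%Z) / 2 - (a1 j + a0 j) / 2)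
      with (((a1 (j + 1)%Z - a1 j) + (a0 (j + 1)%Z - a0 j)) / 2) by field.
    apply Rabs_mean_le; auto.
  - replace ((a1 (j + 1)%Z + a0 (j + 1)%Z) / 2 - 2 * ((a1 j + a0 j) / 2)
             + (a1 (j - 1)%Z + a0 (j - 1)%Z) / 2)
      with (((a1 (j + 1)%Z - 2 * a1 j + a1 (j - 1)%Z)
             + (a0 (j + 1)%Z - 2 * a0 j + a0 (j - 1)%Z)) / 2) by field.
    apply Rabs_mean_le; auto.
Qed.

(** * Energy estimate for the error of the scheme *)

Definition quad_part (e0 e1 : gridfun) : gridfun :=
  fun k => e1 k ^ 2 + e1 k * e0 k + e0 k ^ 2.

Definition cross_part (e0 e1 a0 a1 : gridfun) : gridfun :=
  fun k => 2 * a1 k * e1 k + 2 * a0 k * e0 k + a1 k * e0 k + a0 k * e1 k.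

(* With [U_i = a_i + e_i]:
   [U_1^2 + U_1 U_0 + U_0^2 = a_1^2 + a_1 a_0 + a_0^2 + quad_part + cross_part]. *)
Definition err_flux (al be dx : R) (e0 e1 a0 a1 : gridfun) : gridfun :=
  fun k => - be * dx2 dx (tmean e0 e1) k
           + al / 6 * (quad_part e0 e1 k + cross_part e0 e1 a0 a1 k).

Lemma error_equation al be dx dt (U ut : nat -> gridfun) m :
  0 < dx -> 0 < dt -> scheme_step al be dx dt (U m) (U (S m)) ->
  forall k, ((U (S m) k - ut (S m) k) - (U m k - ut m k)) / dt
    = - dx1 dx (err_flux al be dx (fun j => U m j - ut m j)
                  (fun j => U (S m) j - ut (S m) j) (ut m) (ut (S m))) k
      - trunc_err al be dx dt ut m k.
Proof.
  intros Hdx Hdt Hs k.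
  replace (((U (S m) k - ut (S m) k) - (U m k - ut m k)) / dt)
    with ((U (S m) k - U m k) / dt - (ut (S m) k - ut m k) / dt) by (field; lra).
  rewrite Hs. unfold trunc_err, err_flux, quad_part, cross_part, tmean, dx1, dx2.
  field. lra.
Qed.

Section ErrorEnergy.
Variables (al be dx dt : R) (K : nat) (e0 e1 a0 a1 tau : gridfun).
Hypotheses (Hbe : be <> 0) (Hdx : 0 < dx) (Hdt : 0 < dt).
Hypotheses (Pe0 : periodic_grid K e0) (Pe1 : periodic_grid K e1)
  (Pa0 : periodic_grid K a0) (Pa1 : periodic_grid K a1).

Let w := tmean e0 e1.
Let v := tmean a0 a1.
Let G := err_flux al be dx e0 e1 a0 a1.
Let Lc := cross_part e0 e1 a0 a1.

Lemma periodic_err_flux : periodic_grid K G.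
Proof. unfold G, err_flux, quad_part, cross_part, tmean, dx2. periodicity. Qed.

Lemma periodic_cross_part : periodic_grid K Lc.
Proof. unfold Lc, cross_part. periodicity. Qed.

Hypothesis Ptau : periodic_grid K tau.
Hypothesis err_eqn : forall k, (e1 k - e0 k) / dt = - dx1 dx G k - tau k.

Lemma err_pairing_flux :
  gsum K (fun k => (e1 k - e0 k) / dt * G k * dx) = - gsum K (fun k => tau k * G k * dx).
Proof.
  pose proof periodic_err_flux as PG.
  assert (Hskew : gsum K (fun k => - dx1 dx G k * G k * dx) = 0).
  { rewrite <- (gsum_telescope K (fun k => - (G (k - 1)%Z * G k) / 2)) by periodicity.
    apply gsum_ext. intro k. unfold dx1. simpl_Z_shifts. field. lra. }
  rewrite (gsum_ext _ _ (fun k => - dx1 dx G k * G k * dx - tau k * G k * dx)).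
  - rewrite gsum_sub, Hskew. lra.
  - intro k. rewrite err_eqn. ring.
Qed.

Lemma err_pairing_flux_expand :
  gsum K (fun k => (e1 k - e0 k) / dt * G k * dx)
  = be / (2 * dt) * (norm2 K dx (dxp dx e1) - norm2 K dx (dxp dx e0))
    + al / (6 * dt) * (gsum K (fun k => e1 k ^ 3 * dx) - gsum K (fun k => e0 k ^ 3 * dx))
    + al / 6 * gsum K (fun k => (e1 k - e0 k) / dt * Lc k * dx).
Proof.
  transitivity (gsum K (fun k => (e1 k - e0 k) / dt * (- be * dx2 dx w k) * dx
     + al / (6 * dt) * (e1 k ^ 3 * dx - e0 k ^ 3 * dx)
     + al / 6 * ((e1 k - e0 k) / dt * Lc k * dx))).
  { apply gsum_ext; intro k. unfold G, err_flux, quad_part. fold w Lc. field. lra. }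
  rewrite !gsum_add, !gsum_scal, gsum_sub. f_equal. f_equal.
  unfold norm2. rewrite <- gsum_sub, <- gsum_scal.
  apply (gsum_eq_telescope K
    (fun k => - be * (e1 k - e0 k) * (w k - w (k - 1)%Z) / (dt * dx))).
  - unfold w, tmean. periodicity.
  - intro k. unfold w, tmean, dx2, dxp. simpl_Z_shifts. field. lra.
Qed.

Lemma err_pairing_cross :
  gsum K (fun k => (e1 k - e0 k) / dt * Lc k * dx)
  = - gsum K (fun k => dx1 dx G k * Lc k * dx) - gsum K (fun k => tau k * Lc k * dx).
Proof.
  rewrite <- gsum_opp, <- gsum_sub. apply gsum_ext; intro k. rewrite err_eqn. ring.
Qed.

Lemma tau_pairing :
  gsum K (fun k => tau k * G k * dx) - al / 6 * gsum K (fun k => tau k * Lc k * dx)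
  = be * gsum K (fun k => dxp dx tau k * dxp dx w k * dx)
    + al / 6 * gsum K (fun k => tau k * quad_part e0 e1 k * dx).
Proof.
  rewrite <- !gsum_scal, <- gsum_sub, <- gsum_add.
  apply (gsum_eq_telescope K (fun k => - be * tau k * (w k - w (k - 1)%Z) / dx)).
  - unfold w, tmean. periodicity.
  - intro k. unfold G, err_flux, w, tmean, dx2, dxp. fold Lc. simpl_Z_shifts. field. lra.
Qed.

Lemma energy_identity :
  (norm2 K dx (dxp dx e1) - norm2 K dx (dxp dx e0)) / dt
  + (al / (3 * be) * gsum K (fun k => e1 k ^ 3 * dx)
     - al / (3 * be) * gsum K (fun k => e0 k ^ 3 * dx)) / dt
  = al / (3 * be) * gsum K (fun k => dx1 dx G k * Lc k * dx)
    - 2 * gsum K (fun k => dxp dx tau k * dxp dx w k * dx)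
    - al / (3 * be) * gsum K (fun k => tau k * quad_part e0 e1 k * dx).
Proof.
  pose proof err_pairing_flux as H1. pose proof tau_pairing as H2.
  rewrite err_pairing_flux_expand, err_pairing_cross in H1.
  apply (Rmult_eq_reg_l (be / 2)); [| intro; apply Hbe; lra].
  set (N1 := norm2 K dx (dxp dx e1)) in *. set (N0 := norm2 K dx (dxp dx e0)) in *.
  set (C1 := gsum K (fun k => e1 k ^ 3 * dx)) in *.
  set (C0 := gsum K (fun k => e0 k ^ 3 * dx)) in *.
  set (X := gsum K (fun k => dx1 dx G k * Lc k * dx)) in *.
  set (TD := gsum K (fun k => dxp dx tau k * dxp dx w k * dx)) in *.
  set (TE := gsum K (fun k => tau k * quad_part e0 e1 k * dx)) in *.
  set (TG := gsum K (fun k => tau k * G k * dx)) in *.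
  set (TL := gsum K (fun k => tau k * Lc k * dx)) in *.
  replace (be / 2 * ((N1 - N0) / dt + (al / (3 * be) * C1 - al / (3 * be) * C0) / dt))
    with (be / (2 * dt) * (N1 - N0) + al / (6 * dt) * (C1 - C0)) by (field; lra).
  replace (be / 2 * (al / (3 * be) * X - 2 * TD - al / (3 * be) * TE))
    with (al / 6 * X - be * TD - al / 6 * TE) by (field; lra).
  lra.
Qed.

Definition grad_sq_term : gridfun :=
  fun k => dxp dx w k ^ 2 * (v (k + 1)%Z - v (k + 1 + 1)%Z) / (2 * dx) * dx.

Definition mixed_term : gridfun :=
  fun k => - dxp dx w k * (w k * dx1 dx v (k + 1)%Z - w (k - 1)%Z * dx1 dx v k).

Definition time_diff_term : gridfun :=
  fun k => be / 2 * dx2 dx w k * dx1 dx (fun j => (a1 j - a0 j) * (e1 j - e0 j)) k * dx.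

Definition nonlin_term : gridfun :=
  fun k => - (al / 6) * (quad_part e0 e1 k + Lc k) * dx1 dx Lc k * dx.

(* [cross_part = 6 v w + (a_1 - a_0)(e_1 - e_0) / 2], and [dx1 (v w)] splits by the discrete
   product rule into [v (k+1) * dx1 w k] and [w (k-1) * dx1 v k]. *)
Lemma flux_cross_decomp :
  gsum K (fun k => dx1 dx G k * Lc k * dx)
  = gsum K (fun k => 6 * be * (grad_sq_term k + mixed_term k) + time_diff_term k + nonlin_term k).
Proof.
  pose proof periodic_err_flux as PG. pose proof periodic_cross_part as PL.
  transitivity (gsum K (fun k => - (G k * dx1 dx Lc k) * dx)).
  { apply (gsum_eq_telescope K (fun k => (G (k - 1)%Z * Lc k + G k * Lc (k - 1)%Z) / 2)).
    - periodicity.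
    - intro k. unfold dx1. simpl_Z_shifts. field. lra. }
  transitivity (gsum K (fun k =>
      6 * be * (dx2 dx w k * v (k + 1)%Z * dx1 dx w k * dx
                + dx2 dx w k * (w (k - 1)%Z * dx1 dx v k) * dx)
      + time_diff_term k + nonlin_term k)).
  { apply gsum_ext; intro k.
    unfold time_diff_term, nonlin_term, G, Lc, err_flux, cross_part, quad_part, w, v, tmean,
      dx1, dx2.
    field. lra. }
  rewrite !gsum_add, !gsum_scal, !gsum_add. do 4 f_equal.
  - apply (gsum_eq_telescope K (fun k => v (k + 1)%Z * dxp dx w (k - 1)%Z ^ 2 / 2)).
    + unfold v, w, tmean, dxp. periodicity.
    + intro k. unfold grad_sq_term, dxp, dx1, dx2. simpl_Z_shifts. field. lra.
  - apply (gsum_eq_telescope K (fun k => dxp dx w (k - 1)%Z * (w (k - 1)%Z * dx1 dx v k))).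
    + unfold v, w, tmean, dxp, dx1. periodicity.
    + intro k. unfold mixed_term, dxp, dx1, dx2. simpl_Z_shifts. field. lra.
Qed.

Variables (cd L R0 B0 B1 B2 Bt : R).
Hypotheses (HdL : dx <= L) (Hcd : dt <= cd * dx ^ 3).
Hypotheses (He0 : forall j, Rabs (e0 j) <= R0) (He1 : forall j, Rabs (e1 j) <= R0).
Hypotheses (Ha0 : grid_bounded dx B0 B1 B2 a0) (Ha1 : grid_bounded dx B0 B1 B2 a1).
Hypothesis Hat : forall j, Rabs (a1 j - a0 j) <= Bt * dt.

Definition h1_density : gridfun :=
  fun k => e1 k ^ 2 + e0 k ^ 2 + dxp dx e1 k ^ 2 + dxp dx e0 k ^ 2.

Definition h1_window : gridfun :=
  fun k => h1_density (k - 1)%Z + h1_density k + h1_density (k + 1)%Z.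

Lemma h1_density_nonneg k : 0 <= h1_density k.
Proof.
  unfold h1_density.
  pose proof (pow2_ge_0 (e1 k)). pose proof (pow2_ge_0 (e0 k)).
  pose proof (pow2_ge_0 (dxp dx e1 k)). pose proof (pow2_ge_0 (dxp dx e0 k)). lra.
Qed.

Lemma h1_window_nonneg k : 0 <= h1_window k.
Proof.
  unfold h1_window.
  pose proof (h1_density_nonneg (k - 1)). pose proof (h1_density_nonneg k).
  pose proof (h1_density_nonneg (k + 1)). lra.
Qed.

Lemma Rabs_le_sqrt_h1_window k j : (k - 1 <= j <= k + 1)%Z ->
  Rabs (e0 j) <= sqrt (h1_window k) /\ Rabs (e1 j) <= sqrt (h1_window k) /\
  Rabs (dxp dx e0 j) <= sqrt (h1_window k) /\ Rabs (dxp dx e1 j) <= sqrt (h1_window k).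
Proof.
  intros Hj.
  assert (Hdj : h1_density j <= h1_window k).
  { unfold h1_window.
    pose proof (h1_density_nonneg (k - 1)). pose proof (h1_density_nonneg k).
    pose proof (h1_density_nonneg (k + 1)).
    assert (j = k - 1 \/ j = k \/ j = k + 1)%Z as [-> | [-> | ->]] by lia; lra. }
  unfold h1_density in Hdj.
  pose proof (pow2_ge_0 (e1 j)). pose proof (pow2_ge_0 (e0 j)).
  pose proof (pow2_ge_0 (dxp dx e1 j)). pose proof (pow2_ge_0 (dxp dx e0 j)).
  repeat split; apply Rabs_le_sqrt_of_sq_le; lra.
Qed.

Lemma Rabs_tmean_le_sqrt_h1_window k j : (k - 1 <= j <= k + 1)%Z ->
  Rabs (w j) <= sqrt (h1_window k) /\ Rabs (dxp dx w j) <= sqrt (h1_window k).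
Proof.
  intros Hj. destruct (Rabs_le_sqrt_h1_window k j Hj) as (H0 & H1 & Hd0 & Hd1).
  unfold w. rewrite dxp_tmean. unfold tmean. split; apply Rabs_mean_le; assumption.
Qed.

Lemma grad_sq_term_bound k : Rabs (grad_sq_term k) <= B1 / 2 * h1_window k * dx.
Proof.
  destruct (Rabs_tmean_le_sqrt_h1_window k k) as [_ Hw]; [lia|].
  pose proof (grid_bounded_dxp dx B0 B1 B2 v Hdx (grid_bounded_tmean _ _ _ _ _ _ Ha0 Ha1) (k + 1))
    as Hv.
  replace (grad_sq_term k) with (dx * (dxp dx w k * dxp dx w k * (- dxp dx v (k + 1)%Z / 2)))
    by (unfold grad_sq_term, dxp; field; lra).
  apply Rabs_dx_mul_le; [lra|].
  rewrite <- (sqrt_sqrt (h1_window k)) by apply h1_window_nonneg.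
  replace (B1 / 2 * _) with (sqrt (h1_window k) * sqrt (h1_window k) * (B1 / 2)) by ring.
  apply Rabs_mul_le; [apply Rabs_mul_le; assumption|].
  unfold Rdiv. rewrite Rabs_mult, Rabs_Ropp, (Rabs_pos_eq (/ 2)) by lra. lra.
Qed.

Lemma mixed_term_bound k : Rabs (mixed_term k) <= (B1 + B2) * h1_window k * dx.
Proof.
  destruct (Rabs_tmean_le_sqrt_h1_window k k) as [_ Hwk]; [lia|].
  destruct (Rabs_tmean_le_sqrt_h1_window k (k - 1)) as [Hw Hwk']; [lia|].
  pose proof (grid_bounded_tmean _ _ _ _ _ _ Ha0 Ha1) as Hv.
  pose proof (grid_bounded_dx1 dx B0 B1 B2 v Hdx Hv (k + 1)) as Hv1.
  pose proof (grid_bounded_dx1_diff dx B0 B1 B2 v Hdx Hv k) as Hv2.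
  replace (mixed_term k) with (dx * (- dxp dx w k * (dxp dx w (k - 1)%Z * dx1 dx v (k + 1)%Z
      + w (k - 1)%Z * ((dx1 dx v (k + 1)%Z - dx1 dx v k) / dx))))
    by (unfold mixed_term, dxp; simpl_Z_shifts; field; lra).
  apply Rabs_dx_mul_le; [lra|].
  rewrite <- (sqrt_sqrt (h1_window k)) by apply h1_window_nonneg.
  set (M := sqrt (h1_window k)) in *.
  replace ((B1 + B2) * (M * M)) with (M * (M * B1 + M * B2)) by ring.
  apply Rabs_mul_le; [rewrite Rabs_Ropp; assumption|].
  apply Rabs_add_le; apply Rabs_mul_le; assumption.
Qed.

Lemma time_diff_term_bound k :
  Rabs (time_diff_term k) <= 2 * (Rabs be * cd * L) * Bt * h1_window k * dx.
Proof.
  destruct (Rabs_tmean_le_sqrt_h1_window k k) as [_ Hwk]; [lia|].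
  destruct (Rabs_tmean_le_sqrt_h1_window k (k - 1)) as [_ Hwk']; [lia|].
  assert (Hde : forall j, (k - 1 <= j <= k + 1)%Z ->
            Rabs (e1 j - e0 j) <= 2 * sqrt (h1_window k)).
  { intros j Hj. destruct (Rabs_le_sqrt_h1_window k j Hj) as (H0 & H1 & _).
    replace (2 * _) with (sqrt (h1_window k) + sqrt (h1_window k)) by ring.
    apply Rabs_sub_le; assumption. }
  assert (Hda : forall j, Rabs ((a1 j - a0 j) / dt) <= Bt).
  { intro j. apply Rabs_div_le_of_le_mul; auto. }
  (* The time-step restriction enters here: [dt / dx^2 <= cd dx <= cd L]. *)
  assert (Hc : Rabs (be * (dt / (dx * dx))) <= Rabs be * cd * L).
  { rewrite Rabs_mult, Rmult_assoc, (Rabs_pos_eq (dt / (dx * dx)))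
      by (apply Rlt_le, Rdiv_lt_0_compat; nra).
    apply Rmult_le_compat_l; [apply Rabs_pos|].
    apply Rle_div_l; [nra|]. simpl in Hcd. nra. }
  replace (time_diff_term k) with (dx * (be * (dt / (dx * dx))
      * (dxp dx w k - dxp dx w (k - 1)%Z)
      * ((a1 (k + 1)%Z - a0 (k + 1)%Z) / dt * (e1 (k + 1)%Z - e0 (k + 1)%Z)
         - (a1 (k - 1)%Z - a0 (k - 1)%Z) / dt * (e1 (k - 1)%Z - e0 (k - 1)%Z)) / 4))
    by (unfold time_diff_term, dxp, dx1, dx2; simpl_Z_shifts; field; lra).
  apply Rabs_dx_mul_le; [lra|].
  rewrite <- (sqrt_sqrt (h1_window k)) by apply h1_window_nonneg.
  set (M := sqrt (h1_window k)) in *.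
  apply Rabs_div_le_of_le_mul; [lra|].
  eapply Rle_trans.
  - apply Rabs_mul_le; [apply Rabs_mul_le; [exact Hc | apply Rabs_sub_le; eassumption]|].
    apply Rabs_sub_le; apply Rabs_mul_le; auto; apply Hde; lia.
  - right. ring.
Qed.

Lemma Rabs_quad_part_le k :
  Rabs (quad_part e0 e1 k) <= 3 * R0 * sqrt (h1_window k).
Proof.
  destruct (Rabs_le_sqrt_h1_window k k) as (H0 & H1 & _); [lia|].
  unfold quad_part. rewrite <- !Rsqr_pow2. unfold Rsqr.
  replace (3 * R0 * _) with (R0 * sqrt (h1_window k) + R0 * sqrt (h1_window k)
                            + R0 * sqrt (h1_window k)) by ring.
  repeat apply Rabs_add_le; apply Rabs_mul_le; auto.
Qed.

Lemma Rabs_cross_part_le k :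
  Rabs (Lc k) <= 6 * B0 * sqrt (h1_window k).
Proof.
  destruct (Rabs_le_sqrt_h1_window k k) as (H0 & H1 & _); [lia|].
  destruct Ha0 as (Hb0 & _), Ha1 as (Hb1 & _).
  set (M := sqrt (h1_window k)) in *.
  replace (6 * B0 * M) with (2 * (B0 * M) + 2 * (B0 * M) + B0 * M + B0 * M) by ring.
  unfold Lc, cross_part. rewrite !(Rmult_assoc 2).
  repeat apply Rabs_add_le; try (rewrite Rabs_mult, (Rabs_pos_eq 2) by lra;
    apply Rmult_le_compat_l; [lra|]); apply Rabs_mul_le; auto.
Qed.

Lemma Rabs_dx1_cross_part_le k :
  Rabs (dx1 dx Lc k) <= 6 * (B0 + B1) * sqrt (h1_window k).
Proof.
  assert (Hprod : forall a e, grid_bounded dx B0 B1 B2 a -> (e = e0 \/ e = e1) ->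
            Rabs (dx1 dx (fun j => a j * e j) k) <= (B0 + B1) * sqrt (h1_window k)).
  { intros a e Ha He.
    destruct (Rabs_le_sqrt_h1_window k (k + 1)) as (H0 & H1 & _); [lia|].
    destruct (Rabs_le_sqrt_h1_window k k) as (_ & _ & Hd0 & Hd1); [lia|].
    destruct (Rabs_le_sqrt_h1_window k (k - 1)) as (_ & _ & Hd0' & Hd1'); [lia|].
    apply Rabs_dx1_mul_le;
      [exact Hdx | apply (grid_bounded_dx1 dx B0 B1 B2); assumption | apply Ha | ..];
      destruct He as [-> | ->]; assumption. }
  replace (dx1 dx Lc k) with (2 * dx1 dx (fun j => a1 j * e1 j) k
      + 2 * dx1 dx (fun j => a0 j * e0 j) k + dx1 dx (fun j => a1 j * e0 j) k
      + dx1 dx (fun j => a0 j * e1 j) k)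
    by (unfold Lc, cross_part, dx1; field; lra).
  set (M := sqrt (h1_window k)) in *.
  replace (6 * (B0 + B1) * M) with (2 * ((B0 + B1) * M) + 2 * ((B0 + B1) * M)
      + (B0 + B1) * M + (B0 + B1) * M) by ring.
  repeat apply Rabs_add_le; try (rewrite Rabs_mult, (Rabs_pos_eq 2) by lra;
    apply Rmult_le_compat_l; [lra|]); apply Hprod; auto.
Qed.

Lemma nonlin_term_bound k :
  Rabs (nonlin_term k) <= Rabs al / 6 * ((3 * R0 + 6 * B0) * (6 * (B0 + B1))) * h1_window k * dx.
Proof.
  replace (nonlin_term k)
    with (dx * (- (al / 6) * (quad_part e0 e1 k + Lc k) * dx1 dx Lc k))
    by (unfold nonlin_term; ring).
  apply Rabs_dx_mul_le; [lra|].
  rewrite <- (sqrt_sqrt (h1_window k)) by apply h1_window_nonneg.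
  replace (Rabs al / 6 * _ * _) with
    (Rabs al / 6 * ((3 * R0 + 6 * B0) * sqrt (h1_window k))
     * (6 * (B0 + B1) * sqrt (h1_window k))) by ring.
  apply Rabs_mul_le; [apply Rabs_mul_le|].
  - rewrite Rabs_Ropp, Rabs_div, (Rabs_pos_eq 6) by lra. lra.
  - replace ((3 * R0 + 6 * B0) * _) with
      (3 * R0 * sqrt (h1_window k) + 6 * B0 * sqrt (h1_window k)) by ring.
    apply Rabs_add_le; [apply Rabs_quad_part_le | apply Rabs_cross_part_le].
  - apply Rabs_dx1_cross_part_le.
Qed.

Definition flux_cross_const : R :=
  6 * Rabs be * (B1 / 2 + (B1 + B2)) + 2 * (Rabs be * cd * L) * Bt
  + Rabs al / 6 * ((3 * R0 + 6 * B0) * (6 * (B0 + B1))).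

Lemma flux_cross_summand_bound k :
  Rabs (6 * be * (grad_sq_term k + mixed_term k) + time_diff_term k + nonlin_term k)
  <= flux_cross_const * h1_window k * dx.
Proof.
  pose proof (grad_sq_term_bound k). pose proof (mixed_term_bound k).
  pose proof (time_diff_term_bound k). pose proof (nonlin_term_bound k).
  assert (H6 : Rabs (6 * be * (grad_sq_term k + mixed_term k))
               <= 6 * Rabs be * (B1 / 2 + (B1 + B2)) * h1_window k * dx).
  { rewrite Rabs_mult, Rabs_mult, (Rabs_pos_eq 6) by lra.
    replace (6 * Rabs be * _ * _ * dx)
      with (6 * Rabs be * (B1 / 2 * h1_window k * dx + (B1 + B2) * h1_window k * dx)) by ring.
    apply Rmult_le_compat_l; [pose proof (Rabs_pos be); lra|].
    apply Rabs_add_le; assumption. }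
  unfold flux_cross_const.
  replace ((_ + _ + _) * h1_window k * dx) with
    (6 * Rabs be * (B1 / 2 + (B1 + B2)) * h1_window k * dx
     + 2 * (Rabs be * cd * L) * Bt * h1_window k * dx
     + Rabs al / 6 * ((3 * R0 + 6 * B0) * (6 * (B0 + B1))) * h1_window k * dx) by ring.
  repeat apply Rabs_add_le; assumption.
Qed.

Let S := gsum K (fun k => h1_density k * dx).

Lemma gsum_h1_density : S = normH1_2 K dx e1 + normH1_2 K dx e0.
Proof.
  unfold S, normH1_2, norm2. rewrite <- !gsum_add.
  apply gsum_ext; intro k. unfold h1_density. ring.
Qed.

Lemma gsum_h1_window : gsum K (fun k => h1_window k * dx) = 3 * S.
Proof.
  assert (Pd : periodic_grid K (fun k => h1_density k * dx))
    by (unfold h1_density, dxp; periodicity).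
  unfold h1_window.
  rewrite (gsum_ext _ _ (fun k => h1_density (k - 1)%Z * dx + h1_density k * dx
                                  + h1_density (k + 1)%Z * dx)) by (intro; ring).
  rewrite !gsum_add, (gsum_shift_pred K (fun k => h1_density k * dx) Pd),
    (gsum_shift K (fun k => h1_density k * dx) Pd).
  unfold S. ring.
Qed.

Lemma flux_cross_bound :
  Rabs (gsum K (fun k => dx1 dx G k * Lc k * dx)) <= flux_cross_const * (3 * S).
Proof.
  rewrite flux_cross_decomp, <- gsum_h1_window, <- gsum_scal.
  eapply Rle_trans; [apply gsum_abs|].
  apply gsum_le; intro k. rewrite <- Rmult_assoc. apply flux_cross_summand_bound.
Qed.

Lemma tau_grad_pairing_le :
  - 2 * gsum K (fun k => dxp dx tau k * dxp dx w k * dx) <= norm2 K dx (dxp dx tau) + S / 2.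
Proof.
  replace (S / 2) with (/ 2 * S) by field.
  unfold norm2, S. rewrite <- gsum_scal, <- (gsum_scal K (/ 2)), <- gsum_add.
  apply gsum_le; intro k.
  unfold w. rewrite dxp_tmean. unfold tmean, h1_density.
  pose proof (pow2_ge_0 (dxp dx tau k + (dxp dx e1 k + dxp dx e0 k) / 2)).
  pose proof (pow2_ge_0 (dxp dx e1 k - dxp dx e0 k)).
  pose proof (pow2_ge_0 (e1 k)). pose proof (pow2_ge_0 (e0 k)).
  nra.
Qed.

Let ca := Rabs al / (6 * Rabs be).

Lemma Rabs_energy_coef : Rabs (al / (3 * be)) = 2 * ca.
Proof.
  unfold ca. pose proof (Rabs_pos_lt be Hbe).
  rewrite Rabs_div, Rabs_mult, (Rabs_pos_eq 3) by lra. field. lra.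
Qed.

Lemma tau_quad_pairing_le :
  - (al / (3 * be)) * gsum K (fun k => tau k * quad_part e0 e1 k * dx)
  <= ca * norm2 K dx tau + ca * (9 / 2) * R0 ^ 2 * S.
Proof.
  assert (Hca : 0 <= ca)
    by (pose proof Rabs_energy_coef; pose proof (Rabs_pos (al / (3 * be))); lra).
  unfold norm2, S. rewrite <- !gsum_scal, <- gsum_add. apply gsum_le; intro k.
  assert (Hq : quad_part e0 e1 k ^ 2 <= 9 / 2 * R0 ^ 2 * h1_density k).
  { eapply Rle_trans; [apply quad_form_sq_le; auto|].
    apply Rmult_le_compat_l; [pose proof (pow2_ge_0 R0); lra|].
    unfold h1_density.
    pose proof (pow2_ge_0 (dxp dx e1 k)). pose proof (pow2_ge_0 (dxp dx e0 k)). lra. }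
  assert (Hyoung : - (al / (3 * be)) * (tau k * quad_part e0 e1 k)
                   <= ca * (tau k ^ 2 + quad_part e0 e1 k ^ 2)).
  { eapply Rle_trans; [apply Rle_abs|].
    rewrite Rabs_mult, Rabs_Ropp, Rabs_energy_coef, Rabs_mult.
    rewrite <- (pow2_abs (tau k)), <- (pow2_abs (quad_part e0 e1 k)).
    pose proof (pow2_ge_0 (Rabs (tau k) - Rabs (quad_part e0 e1 k))). nra. }
  replace (- (al / (3 * be)) * (tau k * quad_part e0 e1 k * dx))
    with (- (al / (3 * be)) * (tau k * quad_part e0 e1 k) * dx) by ring.
  replace (ca * (tau k ^ 2 * dx) + ca * (9 / 2) * R0 ^ 2 * (h1_density k * dx))
    with ((ca * tau k ^ 2 + ca * (9 / 2 * R0 ^ 2 * h1_density k)) * dx) by ring.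
  apply Rmult_le_compat_r; [lra|]. nra.
Qed.

Definition energy_const : R := 1 + 9 * ca * R0 ^ 2 + 12 * ca * flux_cross_const.

Lemma energy_estimate :
  (norm2 K dx (dxp dx e1) - norm2 K dx (dxp dx e0)) / dt
  <= - ((al / (3 * be) * gsum K (fun k => e1 k ^ 3 * dx)
         - al / (3 * be) * gsum K (fun k => e0 k ^ 3 * dx)) / dt)
     + energy_const * ((normH1_2 K dx e1 + normH1_2 K dx e0) / 2)
     + ca * norm2 K dx tau + norm2 K dx (dxp dx tau).
Proof.
  pose proof energy_identity as HE.
  pose proof tau_grad_pairing_le as HD. pose proof tau_quad_pairing_le as HQ.
  assert (HX : al / (3 * be) * gsum K (fun k => dx1 dx G k * Lc k * dx)
               <= 2 * ca * (flux_cross_const * (3 * S))).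
  { eapply Rle_trans; [apply Rle_abs|]. rewrite Rabs_mult, Rabs_energy_coef.
    apply Rmult_le_compat_l; [|apply flux_cross_bound].
    pose proof Rabs_energy_coef. pose proof (Rabs_pos (al / (3 * be))). lra. }
  rewrite <- gsum_h1_density. unfold energy_const. lra.
Qed.

End ErrorEnergy.

Lemma energy_const_pos al be cd L R0 B0 B1 B2 Bt : be <> 0 ->
  0 <= cd -> 0 <= L -> 0 <= R0 -> 0 <= B0 -> 0 <= B1 -> 0 <= B2 -> 0 <= Bt ->
  0 < energy_const al be cd L R0 B0 B1 B2 Bt.
Proof.
  intros Hbe Hcd HL HR0 HB0 HB1 HB2 HBt. unfold energy_const, flux_cross_const.
  pose proof (Rabs_pos al). pose proof (Rabs_pos_lt be Hbe). pose proof (pow2_ge_0 R0).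
  assert (0 <= Rabs al / (6 * Rabs be)) by (apply Rle_mult_inv_pos; lra).
  assert (0 <= 6 * Rabs be * (B1 / 2 + (B1 + B2)) + 2 * (Rabs be * cd * L) * Bt
               + Rabs al / 6 * ((3 * R0 + 6 * B0) * (6 * (B0 + B1)))).
  { repeat apply Rplus_le_le_0_compat; repeat apply Rmult_le_pos; lra. }
  nra.
Qed.

Lemma periodic_trunc_err al be dx dt K (ut : nat -> gridfun) m :
  periodic_grid K (ut m) -> periodic_grid K (ut (S m)) ->
  periodic_grid K (trunc_err al be dx dt ut m).
Proof. intros. unfold trunc_err, dx1, dx2. periodicity. Qed.

Lemma scheme_energy_step al be dx dt cd L R0 B0 B1 B2 Bt K (U ut : nat -> gridfun) m :
  be <> 0 -> 0 < dx -> 0 < dt -> dx <= L -> dt <= cd * dx ^ 3 ->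
  periodic_grid K (U m) -> periodic_grid K (U (S m)) ->
  periodic_grid K (ut m) -> periodic_grid K (ut (S m)) ->
  scheme_step al be dx dt (U m) (U (S m)) ->
  (forall j, Rabs (U m j - ut m j) <= R0) -> (forall j, Rabs (U (S m) j - ut (S m) j) <= R0) ->
  grid_bounded dx B0 B1 B2 (ut m) -> grid_bounded dx B0 B1 B2 (ut (S m)) ->
  (forall j, Rabs (ut (S m) j - ut m j) <= Bt * dt) ->
  let e n k := U n k - ut n k in
  let tau := trunc_err al be dx dt ut m in
  (norm2 K dx (dxp dx (e (S m))) - norm2 K dx (dxp dx (e m))) / dt
  <= - ((al / (3 * be) * gsum K (fun k => e (S m) k ^ 3 * dx)
         - al / (3 * be) * gsum K (fun k => e m k ^ 3 * dx)) / dt)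
     + energy_const al be cd L R0 B0 B1 B2 Bt
       * ((normH1_2 K dx (e (S m)) + normH1_2 K dx (e m)) / 2)
     + Rabs al / (6 * Rabs be) * norm2 K dx tau + norm2 K dx (dxp dx tau).
Proof.
  intros Hbe Hdx Hdt HdL Hcd PU0 PU1 Pa0 Pa1 Hs He0 He1 Ha0 Ha1 Hat e tau.
  apply (energy_estimate al be dx dt K (e m) (e (S m)) (ut m) (ut (S m))); auto.
  - unfold e. periodicity.
  - unfold e. periodicity.
  - apply periodic_trunc_err; assumption.
  - apply error_equation; assumption.
Qed.

Lemma scheme_sup_bound K (U : nat -> gridfun) M0 q r : (1 <= K)%nat -> 1 <= q ->
  (forall m, periodic_grid K (U m)) ->
  (forall m, (m <= M0)%nat -> norm_inf K (U m) <= r) -> norm_inf K (U (S M0)) <= q * r ->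
  forall n j, (n <= S M0)%nat -> Rabs (U n j) <= q * r.
Proof.
  intros HK Hq HU Hb HM n j Hn.
  assert (Hr : 0 <= r).
  { pose proof (Rabs_le_norm_inf K (U 0%nat) HK (HU 0%nat) 0).
    pose proof (Hb 0%nat (Nat.le_0_l _)). pose proof (Rabs_pos (U 0%nat 0%Z)). lra. }
  eapply Rle_trans; [apply (Rabs_le_norm_inf K); auto|].
  destruct (Nat.eq_dec n (S M0)) as [-> | Hne]; [assumption|].
  eapply Rle_trans; [apply Hb; lia | nra].
Qed.

Lemma lt_scheme_eps2_cube alpha beta q r dx dt : beta <> 0 -> 0 < dx -> 0 <= q -> 0 <= r ->
  dt < scheme_eps2 alpha beta q r dx -> dt <= 2 / (3 * Rabs beta) * dx ^ 3.
Proof.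
  intros Hbe Hdx Hq Hr Hdt. unfold scheme_eps2 in Hdt.
  pose proof (Rabs_pos_lt beta Hbe). pose proof (pow_lt dx 3 Hdx).
  assert (Hnum : 0 <= Rabs alpha / 6 * dx ^ 2 * (2 * q + 1) * r).
  { pose proof (Rabs_pos alpha). pose proof (pow2_ge_0 dx).
    apply Rmult_le_pos; [|lra]. apply Rmult_le_pos; [|lra]. apply Rmult_le_pos; lra. }
  replace (2 / (3 * Rabs beta) * dx ^ 3) with (dx ^ 3 / (3 / 2 * Rabs beta)) by (field; lra).
  eapply Rle_trans; [apply Rlt_le, Hdt|].
  apply Rmult_le_compat_l; [lra|]. apply Rinv_le_contravar; lra.
Qed.

(** * The exact solution and its samples *)

Lemma continuous2_bounded_on_rect (f : R -> R -> R) a b c d :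
  (forall t x, continuous (fun p : R * R => f (fst p) (snd p)) (t, x)) ->
  exists B, 0 <= B /\ forall t x, a <= t <= b -> c <= x <= d -> Rabs (f t x) <= B.
Proof.
  intros Hc.
  assert (Hloc : forall p : R * R, exists eps : posreal, forall p' : R * R,
             ball p eps p' -> Rabs (f (fst p') (snd p') - f (fst p) (snd p)) < 1).
  { intros [t x]. specialize (Hc t x).
    apply (filterlim_locally _ _) with (eps := mkposreal 1 Rlt_0_1) in Hc.
    destruct Hc as [eps Heps]. exists eps. intros p' Hp'. exact (Heps p' Hp'). }
  (* A finite cover of the rectangle by balls on which [f] varies by less than 1. *)
  set (delta := fun p : Compactness.Tn 2 R =>
        proj1_sig (constructive_indefinite_description _ (Hloc (fst p, fst (snd p))))).
  set (g := fun p : R * (R * unit) => Rabs (f (fst p) (fst (snd p)))).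
  apply NNPP; intro HnB.
  apply (compactness_list 2 (a, (c, tt)) (b, (d, tt)) delta); intros [l Hl]; apply HnB.
  exists (fold_right Rmax 0 (map g l) + 1).
  split; [pose proof (fold_right_Rmax_nonneg g l); lra|].
  intros t x Ht Hx. destruct (Hl (t, (x, tt))) as [p [Hin [_ Hcl]]]; [simpl; tauto|].
  pose proof (fold_right_Rmax_ge g l p Hin) as Hm.
  destruct p as [p1 [p2 []]].
  pose proof (proj2_sig (constructive_indefinite_description _ (Hloc (p1, p2)))) as Heps.
  specialize (Heps (t, x)). unfold g in *. simpl in Heps, Hm, Hcl.
  assert (Hball : ball (p1, p2)
            (proj1_sig (constructive_indefinite_description _ (Hloc (p1, p2)))) (t, x))
    by (split; [exact (proj1 Hcl) | exact (proj1 (proj2 Hcl))]).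
  specialize (Heps Hball).
  pose proof (Rabs_triang_inv (f t x) (f p1 p2)). lra.
Qed.

Lemma periodic_shift_nat (g : R -> R) L :
  (forall x, g (x + L) = g x) -> forall n x, g (x + INR n * L) = g x.
Proof.
  intros H n. induction n; intros x; [rewrite Rmult_0_l, Rplus_0_r; auto|].
  rewrite S_INR. replace (x + (INR n + 1) * L) with ((x + INR n * L) + L) by ring.
  rewrite H. auto.
Qed.

Lemma periodic_shift_Z (g : R -> R) L :
  (forall x, g (x + L) = g x) -> forall n x, g (x + IZR n * L) = g x.
Proof.
  intros H n x. destruct n as [|p|p].
  - simpl. rewrite Rmult_0_l, Rplus_0_r; auto.
  - rewrite <- positive_nat_Z, <- INR_IZR_INZ. apply periodic_shift_nat; auto.
  - rewrite <- Pos2Z.opp_pos, opp_IZR, <- positive_nat_Z, <- INR_IZR_INZ.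
    rewrite <- (periodic_shift_nat g L H (Pos.to_nat p) (x + - INR (Pos.to_nat p) * L)).
    f_equal. ring.
Qed.

Lemma periodic_bounded (f : R -> R -> R) L a b B : 0 < L ->
  (forall t x, f t (x + L) = f t x) ->
  (forall t x, a <= t <= b -> 0 <= x <= L -> Rabs (f t x) <= B) ->
  forall t x, a <= t <= b -> Rabs (f t x) <= B.
Proof.
  intros HL Hp Hb t x Ht.
  destruct (archimed (x / L)) as [H1 H2].
  set (n := (up (x / L) - 1)%Z).
  assert (En : IZR n = IZR (up (x / L)) - 1) by (unfold n; rewrite minus_IZR; reflexivity).
  replace (f t x) with (f t (x - IZR n * L)).
  - assert (Hxl : x = (x / L) * L) by (field; lra).
    apply Hb; auto. rewrite En. split; rewrite Hxl at 1; nra.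
  - rewrite <- (periodic_shift_Z (f t) L (Hp t) n). f_equal. ring.
Qed.

Lemma pdx_periodic (g : R -> R -> R) L :
  (forall t x, g t (x + L) = g t x) -> forall t x, pdx g t (x + L) = pdx g t x.
Proof.
  intros H t x. unfold pdx, Derive. f_equal. apply Lim_ext. intro h.
  replace (x + L + h) with ((x + h) + L) by ring. rewrite !H. reflexivity.
Qed.

Lemma pdt_periodic (g : R -> R -> R) L :
  (forall t x, g t (x + L) = g t x) -> forall t x, pdt g t (x + L) = pdt g t x.
Proof. intros H t x. unfold pdt. apply Derive_ext. intro s. apply H. Qed.

Lemma pderiv_periodic (f : R -> R -> R) L w :
  (forall t x, f t (x + L) = f t x) -> forall t x, pderiv w f t (x + L) = pderiv w f t x.
Proof.
  intros Hf. induction w as [|[|] w IH]; simpl;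
    [exact Hf | apply pdt_periodic | apply pdx_periodic]; exact IH.
Qed.

Lemma smooth2_pderiv_bounded (u : R -> R -> R) L T w : smooth2 u -> 0 < L ->
  (forall t x, u t (x + L) = u t x) ->
  exists B, 0 <= B /\ forall t x, 0 <= t <= T -> Rabs (pderiv w u t x) <= B.
Proof.
  intros Hsm HL Hper.
  destruct (continuous2_bounded_on_rect (pderiv w u) 0 T 0 L (proj2 (proj2 (Hsm w))))
    as [B [HB Hb]].
  exists B. split; [exact HB|].
  apply (periodic_bounded _ L 0 T B HL); auto using pderiv_periodic.
Qed.

Lemma Rabs_diff_le_of_Derive_le (f : R -> R) a b B : a <= b ->
  (forall y, ex_derive f y) -> (forall y, a <= y <= b -> Rabs (Derive f y) <= B) ->
  Rabs (f b - f a) <= B * (b - a).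
Proof.
  intros Hab Hd Hb.
  destruct (MVT_gen f a b (Derive f)) as [c [Hc ->]].
  - intros y _. apply Derive_correct, Hd.
  - intros y _. apply (derivable_continuous_pt f y
      (exist _ (Derive f y) (proj1 (is_derive_Reals f y _) (Derive_correct f y (Hd y))))).
  - rewrite Rmin_left, Rmax_right in Hc by lra.
    rewrite Rabs_mult, (Rabs_pos_eq (b - a)) by lra.
    apply Rmult_le_compat_r; [lra | auto].
Qed.

Lemma Rabs_second_diff_le (f : R -> R) B x h : 0 <= h ->
  (forall y, ex_derive f y) -> (forall y, ex_derive (Derive f) y) ->
  (forall y, Rabs (Derive (Derive f) y) <= B) ->
  Rabs (f (x + h) - 2 * f x + f (x - h)) <= B * (h * h).
Proof.
  intros Hh Hd Hd2 Hb.
  set (phi := fun y => f (y + h) - f y).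
  assert (Hphi : forall y, is_derive phi y (Derive f (y + h) - Derive f y)).
  { intro y. unfold phi. auto_derive; [auto | rewrite !Rmult_1_l; reflexivity]. }
  replace (f (x + h) - 2 * f x + f (x - h)) with (phi x - phi (x - h))
    by (unfold phi; replace (x - h + h) with x by ring; ring).
  replace (B * (h * h)) with (B * h * (x - (x - h))) by ring.
  apply Rabs_diff_le_of_Derive_le; [lra | intro y; eexists; apply Hphi |].
  intros y _. rewrite (is_derive_unique _ _ _ (Hphi y)).
  replace (B * h) with (B * (y + h - y)) by ring.
  apply (Rabs_diff_le_of_Derive_le (Derive f) y (y + h) B); [lra | auto | auto].
Qed.

Section SampledSolution.
Variables (u : R -> R -> R) (L T B0 B1 B2 Bt : R) (K M : nat).
Hypotheses (Hsm : smooth2 u) (HL : 0 < L) (HT : 0 < T) (HK : (1 <= K)%nat) (HM : (0 < M)%nat).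
Hypothesis Hper : forall t x, u t (x + L) = u t x.
Hypotheses (Hu0 : forall t x, 0 <= t <= T -> Rabs (u t x) <= B0)
  (Hu1 : forall t x, 0 <= t <= T -> Rabs (pdx u t x) <= B1)
  (Hu2 : forall t x, 0 <= t <= T -> Rabs (pdx (pdx u) t x) <= B2)
  (Hut : forall t x, 0 <= t <= T -> Rabs (pdt u t x) <= Bt).

Let dx := L / INR K.
Let dt := T / INR M.
Let ut (n : nat) : gridfun := fun k => u (INR n * dt) (IZR k * dx).

Lemma mesh_dx_pos : 0 < dx.
Proof. apply Rdiv_lt_0_compat; [lra | apply lt_0_INR, HK]. Qed.

Lemma mesh_dt_pos : 0 < dt.
Proof. apply Rdiv_lt_0_compat; [lra | apply lt_0_INR, HM]. Qed.

Lemma mesh_dx_le : dx <= L.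
Proof. pose proof (le_INR 1 K HK). apply Rle_div_l; simpl in *; nra. Qed.

Lemma mesh_time_range n : (n <= M)%nat -> 0 <= INR n * dt <= T.
Proof.
  intros Hn. pose proof (le_INR _ _ Hn). pose proof (pos_INR n). pose proof mesh_dt_pos.
  assert (HMp : 0 < INR M) by apply lt_0_INR, HM.
  split; [nra|].
  replace (INR n * dt) with (T * (INR n / INR M)) by (unfold dt; field; lra).
  rewrite <- (Rmult_1_r T) at 2. apply Rmult_le_compat_l; [lra|].
  apply Rle_div_l; lra.
Qed.

Lemma sample_periodic n : periodic_grid K (ut n).
Proof.
  intros k. assert (HKp : 0 < INR K) by apply lt_0_INR, HK.
  unfold ut. rewrite plus_IZR, <- INR_IZR_INZ.
  replace ((IZR k + INR K) * dx) with (IZR k * dx + L) by (unfold dx; field; lra).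
  apply Hper.
Qed.

Lemma sample_grid_bounded n : (n <= M)%nat -> grid_bounded dx B0 B1 B2 (ut n).
Proof.
  intros Hn. pose proof (mesh_time_range n Hn) as Ht. pose proof mesh_dx_pos.
  assert (Hd : forall y, ex_derive (fun y => u (INR n * dt) y) y)
    by exact (proj1 (proj2 (Hsm nil)) (INR n * dt)).
  assert (Hd2 : forall y, ex_derive (pdx u (INR n * dt)) y)
    by exact (proj1 (proj2 (Hsm (false :: nil))) (INR n * dt)).
  unfold ut. repeat split; intro j; [apply Hu0, Ht | ..].
  - rewrite plus_IZR. replace ((IZR j + 1) * dx) with (IZR j * dx + dx) by ring.
    replace (B1 * dx) with (B1 * (IZR j * dx + dx - IZR j * dx)) by ring.
    apply (Rabs_diff_le_of_Derive_le (fun y => u (INR n * dt) y)); [lra | exact Hd |].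
    intros y _. apply Hu1, Ht.
  - rewrite plus_IZR, minus_IZR.
    replace ((IZR j + 1) * dx) with (IZR j * dx + dx) by ring.
    replace ((IZR j - 1) * dx) with (IZR j * dx - dx) by ring.
    apply (Rabs_second_diff_le (fun y => u (INR n * dt) y)); [lra | exact Hd | exact Hd2 |].
    intro y. apply Hu2, Ht.
Qed.

Lemma sample_time_diff n : (n < M)%nat -> forall j, Rabs (ut (S n) j - ut n j) <= Bt * dt.
Proof.
  intros Hn j.
  pose proof (mesh_time_range n (Nat.lt_le_incl _ _ Hn)). pose proof (mesh_time_range (S n) Hn).
  unfold ut. replace (Bt * dt) with (Bt * (INR (S n) * dt - INR n * dt)) by (rewrite S_INR; ring).
  apply (Rabs_diff_le_of_Derive_le (fun s => u s (IZR j * dx))).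
  - rewrite S_INR. pose proof mesh_dt_pos. lra.
  - exact (fun s => proj1 (Hsm nil) s (IZR j * dx)).
  - intros s Hs. apply Hut. lra.
Qed.

End SampledSolution.

Theorem lemma3p5 :
  forall (alpha beta L T q r : R) (u : R -> R -> R),
    beta <> 0 -> 0 < L -> 0 < T -> 1 < q ->
    (* u is a smooth L-periodic solution of u_t = -alpha u u_x + beta u_xxx on [0,T] x R *)
    smooth2 u ->
    (forall t x, u t (x + L) = u t x) ->
    (forall t x, 0 <= t <= T ->
       pdt u t x = - alpha * u t x * pdx u t x + beta * pdx (pdx (pdx u)) t x) ->
    (* r > sup_{t in [0,T], x} |u(t,x)| *)
    (exists s, s < r /\ forall t x, 0 <= t <= T -> Rabs (u t x) <= s) ->
    exists C2 : R, 0 < C2 /\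
    forall (c0 : R) (K M M0 : nat) (U : nat -> gridfun),
      0 < c0 -> (1 <= K)%nat -> (M0 < M)%nat ->
      let dx := L / INR K in
      let dt := T / INR M in
      let ut : nat -> gridfun := fun m k => u (INR m * dt) (IZR k * dx) in
      let e : nat -> gridfun := fun m k => U m k - ut m k in
      let tau := trunc_err alpha beta dx dt ut in
      (forall m, periodic_grid K (U m)) ->
      (forall k, U 0%nat k = u 0 (IZR k * dx)) ->
      (forall n, (n <= M0)%nat -> scheme_step alpha beta dx dt (U n) (U (S n))) ->
      (forall m, (m <= M0)%nat -> norm_inf K (U m) <= r) ->
      dt < Rmin (scheme_eps1 alpha beta q r dx) (scheme_eps2 alpha beta q r dx) ->
      norm_inf K (U (S M0)) <= q * r ->
      (forall m, (m <= M0)%nat ->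
         gnorm K dx (tau m) <= c0 * (dt ^ 2 + dx ^ 2) /\
         gnorm K dx (dxp dx (tau m)) <= c0 * (dt ^ 2 + dx ^ 2)) ->
      dt <= dx ->
      forall m, (m <= M0)%nat ->
        let A := fun n => alpha / (3 * beta) * gsum K (fun k => (e n k) ^ 3 * dx) in
        (norm2 K dx (dxp dx (e (S m))) - norm2 K dx (dxp dx (e m))) / dt
        <= - ((A (S m) - A m) / dt)
           + C2 * ((normH1_2 K dx (e (S m)) + normH1_2 K dx (e m)) / 2)
           + (Rabs alpha / (6 * Rabs beta) + 1) * c0 ^ 2 * (dt ^ 2 + dx ^ 2) ^ 2.
Proof.
  intros alpha beta L T q r u Hbe HL HT Hq Hsm Hper _ [s [Hsr Hs]].
  assert (Hs0 : 0 <= s) by (pose proof (Hs 0 0 ltac:(lra)); pose proof (Rabs_pos (u 0 0)); lra).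
  pose proof (Rabs_pos_lt beta Hbe) as Hbe'.
  destruct (smooth2_pderiv_bounded u L T (false :: nil) Hsm HL Hper) as [B1 [HB1 Hu1]].
  destruct (smooth2_pderiv_bounded u L T (false :: false :: nil) Hsm HL Hper) as [B2 [HB2 Hu2]].
  destruct (smooth2_pderiv_bounded u L T (true :: nil) Hsm HL Hper) as [Bt [HBt Hut]].
  set (cd := 2 / (3 * Rabs beta)).
  exists (energy_const alpha beta cd L (q * r + s) s B1 B2 Bt).
  split; [apply energy_const_pos; try apply Rle_mult_inv_pos; nra|].
  intros c0 K M M0 U _ HK HM0 dx dt ut e tau HUper _ Hsch Hbnd Hdt0 HUM0 Htau _ m Hm A.
  assert (He : forall n j, (n <= S M0)%nat -> Rabs (U n j - ut n j) <= q * r + s).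
  { intros n j Hn. apply Rabs_sub_le; [apply (scheme_sup_bound K U M0); auto; lra|].
    apply Hs, (mesh_time_range T M); [lra | lia | lia]. }
  destruct (Htau m Hm) as [Ht0 Ht1].
  eapply Rle_trans.
  - apply (scheme_energy_step alpha beta dx dt cd L (q * r + s) s B1 B2 Bt K U ut m);
      try first [ apply HUper | apply (Hsch m Hm) | intro j; apply He; lia
                | apply mesh_dx_pos | apply mesh_dt_pos | apply mesh_dx_le
                | apply sample_periodic | apply sample_grid_bounded | apply sample_time_diff ];
      try assumption; try lia.
    apply (lt_scheme_eps2_cube alpha beta q r); try lra.
    + apply mesh_dx_pos; assumption.
    + eapply Rlt_le_trans; [exact Hdt0 | apply Rmin_r].
  - assert (Hca : 0 <= Rabs alpha / (6 * Rabs beta))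
      by (apply Rle_mult_inv_pos; [apply Rabs_pos | lra]).
    pose proof (weighted_sum_le_of_sqrt_le _ _ _ _ Hca Ht0 Ht1).
    unfold A, e, tau in *. cbv beta in *. lra.
Qed.
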